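(* Let $N\ge2$, let $\mathbf{K}\in\mathbb{R}^{N\times N}$ be the cyclic shift matrix ($(\mathbf{K}\mathbf{x})_1=x_N$, $(\mathbf{K}\mathbf{x})_i=x_{i-1}$ for $i\ge2$), $\mathbf{K}(\nu)=(1-\nu)\mathbf{I}+\nu\mathbf{K}$, and for $\tilde\nu\in\mathbb{R}$ let $\mathcal{K}(\tilde\nu)=\mathbf{K}^{\lfloor\tilde\nu\rfloor}\mathbf{K}(\tilde\nu-\lfloor\tilde\nu\rfloor)$ (with $\mathbf{K}^{-1}=\mathbf{K}^T$). Let $\mathbf{a},\mathbf{b}\in\mathbb{R}^N$, both not parallel to $\mathbf{1}=(1,\dots,1)^T$. Define $g:\mathbb{R}\to\mathbb{R}^N$ by $g(\tilde\nu)=\mathbf{b}-\mathcal{K}(\tilde\nu)^T\mathbf{a}$, and let $L$ be the period of $g$, i.e. the smallest $L>0$ with $g(x+L)=g(x)$ for all $x\in\mathbb{R}$. Then $$L=\frac{N}{\gcd\big[\operatorname{supp}\mathcal{F}(\mathbf{a})\setminus\{0\}\big]},$$ where $\mathcal{F}(\mathbf{a})$ is the discrete Fourier transform of $\mathbf{a}$, $\operatorname{supp}\mathcal{F}(\mathbf{a})\subseteq\{0,1,\dots,N-1\}$ is the set of frequency indices $k$ with $\mathcal{F}(\mathbf{a})_k\neq0$, and $\gcd$ denotes the greatest common divisor of that set of integers. *)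

From HB Require Import structures.
From mathcomp Require Import all_boot all_order all_algebra.
From mathcomp Require Import all_classical all_reals all_analysis.
Set Implicit Arguments. Unset Strict Implicit. Unset Printing Implicit Defensive.
Import Order.TTheory GRing.Theory Num.Theory.
Local Open Scope ring_scope.

(* cyclic shift matrix: (K x)_i = x_{i-1 mod N}, i.e. K i j = [j == i-1 mod N] *)
Definition shiftK (R : realType) (N : nat) : 'M[R]_N :=
  \matrix_(i, j) (((j : nat) == (i + N.-1) %% N)%N)%:R.

Definition Knu (R : realType) (N : nat) (nu : R) : 'M[R]_N :=
  (1 - nu) *: 1%:M + nu *: shiftK R N.

Definition Kpowz (R : realType) (N : nat) (m : int) : 'M[R]_N :=
  match m with
  | Posz n => shiftK R N ^+ n
  | Negz n => (shiftK R N)^T ^+ n.+1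
  end.

Definition calK (R : realType) (N : nat) (nt : R) : 'M[R]_N :=
  Kpowz R N (Num.floor nt) *m Knu N (nt - (Num.floor nt)%:~R).

Definition gfun (R : realType) (N : nat) (a b : 'cV[R]_N) (nt : R) : 'cV[R]_N :=
  b - (calK N nt)^T *m a.

(* DFT F(a)_k = sum_j a_j exp(-2 pi i j k / N), written via real and imaginary parts *)
Definition dft_re (R : realType) (N : nat) (a : 'cV[R]_N) (k : nat) : R :=
  \sum_(j < N) a j ord0 * cos (2 * pi * (j * k)%:R / N%:R).
Definition dft_im (R : realType) (N : nat) (a : 'cV[R]_N) (k : nat) : R :=
  - \sum_(j < N) a j ord0 * sin (2 * pi * (j * k)%:R / N%:R).

Definition in_supp_dft (R : realType) (N : nat) (a : 'cV[R]_N) (k : nat) : bool :=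
  (dft_re a k != 0) || (dft_im a k != 0).

Definition gcd_supp (R : realType) (N : nat) (a : 'cV[R]_N) : nat :=
  \big[gcdn/0%N]_(k < N | (0 < k)%N && in_supp_dft a k) (k : nat).

Definition is_period (R : realType) (N : nat) (g : R -> 'cV[R]_N) (L : R) : Prop :=
  forall x : R, g (x + L) = g x.

Definition parallel_to_one (R : realType) (N : nat) (v : 'cV[R]_N) : Prop :=
  exists c : R, v = c *: const_mx 1.

From HB Require Import structures.
From mathcomp Require Import all_boot all_order all_algebra.
From mathcomp Require Import all_classical all_reals all_analysis.
From mathcomp Require Import ring lra.
Import Order.TTheory GRing.Theory Num.Theory.
Local Open Scope ring_scope.
Set Implicit Arguments. Unset Strict Implicit. Unset Printing Implicit Defensive.

(* Write x = k + s with k = floor x and 0 <= s < 1.  Then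
   calK(x)^T a = (1 - s) crot k a + s crot (k + 1) a, where crot k a is the
   cyclic rotation i |-> a_(i + k mod N): g interpolates linearly between
   rotations of a.  An integer m is a period iff crot m a = a; by the DFT shift
   theorem and DFT inversion this holds iff N divides m k for every k in
   supp F(a), i.e. iff N / gcd(supp F(a) \ {0}) divides m.  A period with
   fractional part 0 < f < 1 gives f (1 - f) (2 a_i - a_(i-1) - a_(i+1)) = 0,
   so the entries of a form a periodic arithmetic progression and a is parallel
   to 1. *)

Lemma frac_itv (R : realType) (x : R) : 0 <= x - (Num.floor x)%:~R < 1.
Proof.
have := floor_le x; have := floorD1_gt x; rewrite intrD => ? ?.
by apply/andP; split; lra.
Qed.

Lemma cos_sin_half (R : realType) (y : R) : cos y = 1 - sin (y / 2) ^+ 2 *+ 2.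
Proof.
have {1}-> : y = y / 2 + y / 2 by field.
by rewrite cosD -!expr2 cos2sin2 mulr2n opprD addrA.
Qed.

Lemma second_diff0_affine (R : realType) (U : nat -> R) :
  (forall j, U j.+1 *+ 2 = U j + U j.+2) -> forall j, U j = U 0%N + j%:R * (U 1%N - U 0%N).
Proof.
move=> diff0; suff affine2 j : U j = U 0%N + j%:R * (U 1%N - U 0%N) /\
    U j.+1 = U 0%N + j.+1%:R * (U 1%N - U 0%N) by move=> j; case: (affine2 j).
elim: j => [|j [IHj IHj1]]; first by rewrite mul0r addr0 mul1r addrC subrK.
split=> //; have -> : U j.+2 = U j.+1 *+ 2 - U j by rewrite diff0 addrC addKr.
rewrite IHj IHj1 -!natr1; ring.
Qed.

Section CyclicRotation.
Variables (R : realType) (n : nat).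
Local Notation N := n.+1.
Implicit Types (v : 'cV[R]_N) (p q : int).

Definition crot p v : 'cV[R]_N :=
  \col_(i < N) v (inord `|((i%:Z + p) %% N%:Z)%Z|) ord0.

Lemma absz_modz_lt (x : int) : (`|(x %% N%:Z)%Z| < N)%N.
Proof. by rewrite -ltz_nat gez0_abs ?modz_ge0 // ltz_pmod. Qed.

Lemma crotD p q v : crot p (crot q v) = crot (p + q) v.
Proof.
apply/matrixP => i j; rewrite !mxE inordK ?absz_modz_lt //.
by rewrite gez0_abs ?modz_ge0 // modzDml addrA.
Qed.

Lemma crot_nat (m : nat) v (i : 'I_N) :
  crot m v i ord0 = v (inord ((i + m) %% N)) ord0.
Proof. by rewrite mxE -PoszD modz_nat absz_nat. Qed.

Lemma crot0 v : crot 0 v = v.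
Proof.
apply/matrixP => i j; rewrite (ord1 j) crot_nat addn0 modn_small //.
by rewrite inord_val.
Qed.

Lemma shiftK_mulmx v : shiftK R N *m v = crot (-1) v.
Proof.
apply/matrixP => i j; rewrite !mxE (ord1 j).
rewrite (bigD1 (inord ((i + n) %% N))) //= big1 ?addr0.
  rewrite !mxE inordK ?ltn_pmod // eqxx mul1r; congr (v _ _); apply/val_inj => /=.
  have -> : (i%:Z - 1 = (i + n)%:Z - N%:Z)%R.
    rewrite PoszD -addrA; congr (_ + _).
    by rewrite -addn1 PoszD opprD addrA subrr add0r.
  by rewrite -(modzDr _ N%:Z) subrK modz_nat absz_nat.
move=> k neq_k; rewrite !mxE /=; case: eqP => [kE|]; last by rewrite mul0r.
by case/eqP: neq_k; apply/val_inj; rewrite /= kE inordK ?ltn_pmod.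
Qed.

Lemma trmx_shiftK_mulmx v : (shiftK R N)^T *m v = crot 1 v.
Proof.
apply/matrixP => i j; rewrite !mxE (ord1 j).
have i_succ_pred : i == (((i + 1) %% N + n) %% N)%N :> nat.
  by rewrite modnDml -addnA add1n modnDr modn_small.
rewrite (bigD1 (inord ((i + 1) %% N)%N)) //= big1 ?addr0.
  by rewrite !mxE inordK ?ltn_pmod // modz_nat absz_nat i_succ_pred mul1r.
move=> k neq_k; rewrite !mxE /=; case: eqP => [kE|]; last by rewrite mul0r.
case/eqP: neq_k; apply/val_inj; rewrite /= kE inordK ?ltn_pmod //.
by rewrite modnDml -addnA addn1 modnDr modn_small.
Qed.

Lemma trmx_exp_mulmx (M : 'M[R]_N) p :
  (forall v, M^T *m v = crot p v) -> forall k v, (M ^+ k)^T *m v = crot (p * k%:Z) v.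
Proof.
move=> hM; elim=> [|k IH] v; first by rewrite expr0 trmx1 mul1mx mulr0 crot0.
rewrite exprSr -mulmxE trmx_mul -mulmxA IH hM crotD; congr (crot _ v).
by rewrite -addn1 PoszD mulrDr mulr1 addrC.
Qed.

Lemma trmx_Kpowz_mulmx (k : int) v : (Kpowz R N k)^T *m v = crot k v.
Proof.
case: k => m /=; first by rewrite (trmx_exp_mulmx trmx_shiftK_mulmx) mul1r.
have shiftKT_mulmx w : ((shiftK R N)^T)^T *m w = crot (-1) w.
  by rewrite trmxK shiftK_mulmx.
by rewrite (trmx_exp_mulmx shiftKT_mulmx) NegzE mulN1r.
Qed.

Lemma trmx_Knu_mulmx (nu : R) v :
  (Knu N nu)^T *m v = (1 - nu) *: v + nu *: crot 1 v.
Proof.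
rewrite /Knu raddfD /= !linearZ /= trmx1 mulmxDl -!scalemxAl mul1mx.
by rewrite trmx_shiftK_mulmx.
Qed.

Lemma trmx_calK_mulmx (k : int) (s : R) v : 0 <= s < 1 ->
  (calK N (k%:~R + s))^T *m v = (1 - s) *: crot k v + s *: crot (k + 1) v.
Proof.
move=> s01; have floorE : Num.floor (k%:~R + s) = k.
  by apply: floor_def; rewrite lerDl rmorphD /= ltrD2l.
rewrite /calK floorE trmx_mul -mulmxA trmx_Kpowz_mulmx trmx_Knu_mulmx crotD.
by rewrite addrAC subrr add0r [(1 + k)%R]addrC.
Qed.

Lemma trmx_calK_int_mulmx (k : int) v : (calK N k%:~R)^T *m v = crot k v.
Proof.
have := @trmx_calK_mulmx k 0 v; rewrite lexx ltr01 addr0 => ->//.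
by rewrite subr0 scale1r scale0r addr0.
Qed.

End CyclicRotation.

Section DiscreteFourier.
Variables (R : realType) (n : nat).
Local Notation N := n.+1.
Implicit Types (a : 'cV[R]_N).

Definition dft_angle (x : nat) : R := 2 * pi * x%:R / N%:R.

Lemma dft_angleD_mul (x q : nat) :
  dft_angle (x + N * q) = dft_angle x + pi *+ 2 *+ q.
Proof.
rewrite /dft_angle natrD natrM -mulr_natr; field.
by rewrite addrC natr1 pnatr_eq0.
Qed.

Lemma dft_angleNB (j k : nat) : (k <= N)%N ->
  dft_angle (j * (N - k)) = - dft_angle (j * k) + pi *+ 2 *+ j.
Proof.
move=> leqkN; rewrite /dft_angle !natrM natrB // -mulr_natr; field.
by rewrite addrC natr1 pnatr_eq0.
Qed.

Lemma dft_angleB (l j k : nat) : (j <= N + l)%N ->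
  dft_angle ((l + N - j) * k) = dft_angle (l * k) - dft_angle (j * k) + pi *+ 2 *+ k.
Proof.
move=> hj; rewrite /dft_angle !natrM natrB ?natrD; last by rewrite addnC.
rewrite -mulr_natr; field.
by rewrite addrC natr1 pnatr_eq0.
Qed.

Lemma cos_dft_angle_mod (x : nat) : cos (dft_angle (x %% N)) = cos (dft_angle x).
Proof. by rewrite {2}(divn_eq x N) addnC mulnC dft_angleD_mul (periodicn (@cosD2pi R)). Qed.

Lemma sin_dft_angle_mod (x : nat) : sin (dft_angle (x %% N)) = sin (dft_angle x).
Proof. by rewrite {2}(divn_eq x N) addnC mulnC dft_angleD_mul (periodicn (@sinD2pi R)). Qed.

(* For [0 < r := x mod N < N], [sin (dft_angle r / 2) = sin (pi r / N) > 0]. *)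
Lemma cos_dft_angle_eq1 (x : nat) : cos (dft_angle x) = 1 -> (N %| x)%N.
Proof.
rewrite -cos_dft_angle_mod /dvdn; set r := (x %% N)%N.
have ltrN : (r < N)%N by rewrite ltn_pmod.
have [-> //|r_gt0] := posnP r; rewrite cos_sin_half => /eqP.
rewrite subr_eq addrC -subr_eq subrr eq_sym mulrn_eq0 /= expf_eq0 /= => /eqP sin0.
have : 0 < sin (dft_angle r / 2).
  have -> : dft_angle r / 2 = pi * (r%:R / N%:R).
    by rewrite /dft_angle; field; rewrite addrC natr1 pnatr_eq0.
  apply: sin_gt0_pi; rewrite mulr_gt0 ?pi_gt0 ?divr_gt0 ?ltr0n //=.
  by rewrite -[X in _ < X]mulr1 ltr_pM2l ?pi_gt0 // ltr_pdivrMr ?ltr0n // mul1r ltr_nat.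
by rewrite sin0 ltxx.
Qed.

(* Telescoping with [2 sin(x/2) cos(k x) = sin((k + 1/2) x) - sin((k - 1/2) x)]. *)
Lemma sum_cos_dft_angle (m : nat) : ~~ (N %| m)%N ->
  \sum_(k < N) cos (dft_angle (m * k)) = 0.
Proof.
move=> ndvd; set x := dft_angle m.
have angleE k : dft_angle (m * k) = k%:R * x.
  by rewrite /x /dft_angle natrM; field; rewrite addrC natr1 pnatr_eq0.
have sin_half_neq0 : sin (x / 2) != 0.
  apply: contra ndvd => /eqP sin0; apply: cos_dft_angle_eq1.
  by rewrite cos_sin_half sin0 expr0n /= mul0rn subr0.
pose F k := sin (k%:R * x - x / 2).
have Fstep k : F k.+1 - F k = cos (k%:R * x) * (sin (x / 2) *+ 2).
  rewrite /F -natr1 mulrDl mul1r.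
  have -> : k%:R * x + x - x / 2 = k%:R * x + x / 2 by field.
  rewrite sinD sinB; ring.
apply: (mulIf (_ : sin (x / 2) *+ 2 != 0)); first by rewrite mulrn_eq0.
rewrite mul0r mulr_suml (eq_bigr (fun k : 'I_N => F k.+1 - F k)); last first.
  by move=> k _; rewrite angleE Fstep.
rewrite -(big_mkord xpredT (fun k => F k.+1 - F k)) telescope_sumr // /F.
have -> : N%:R * x = pi *+ 2 *+ m by rewrite /x /dft_angle -mulr_natr; field.
by rewrite mul0r add0r [pi *+ 2 *+ m - _]addrC (periodicn (@sinD2pi R)) subrr.
Qed.

Lemma dft_inversion a (j : 'I_N) :
  N%:R * a j ord0 = \sum_(k < N)
    (dft_re a k * cos (dft_angle (j * k)) - dft_im a k * sin (dft_angle (j * k))).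
Proof.
transitivity (\sum_(k < N) \sum_(l < N) a l ord0 * cos (dft_angle ((l + N - j) * k)));
    last first.
  apply: eq_bigr => k _; rewrite /dft_re /dft_im mulNr opprK !mulr_suml -big_split /=.
  apply: eq_bigr => l _; rewrite dft_angleB; last by rewrite ltnW // ltn_addr.
  rewrite (periodicn (@cosD2pi R)) cosB /dft_angle; ring.
rewrite exchange_big /= (bigD1 j) //= [X in _ + X]big1 ?addr0.
  rewrite -mulr_sumr mulrC addKn (eq_bigr (fun _ => 1)) ?sumr_const ?card_ord //.
  move=> k _; rewrite -[(N * k)%N]add0n dft_angleD_mul (periodicn (@cosD2pi R)).
  by rewrite /dft_angle mulr0 mul0r cos0.
move=> l neq_lj; rewrite -mulr_sumr sum_cos_dft_angle ?mulr0 //.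
apply/negP; rewrite /dvdn => /eqP dvdN.
have : ((l + N - j + j) %% N = j %% N)%N by rewrite -modnDml dvdN.
rewrite subnK; last by rewrite ltnW // ltn_addl.
by rewrite modnDr !modn_small // => /val_inj/eqP; rewrite (negbTE neq_lj).
Qed.

Lemma eq_coef_of_dft a (j1 j2 : 'I_N) :
  (forall k : 'I_N, in_supp_dft a k ->
     cos (dft_angle (j1 * k)) = cos (dft_angle (j2 * k)) /\
     sin (dft_angle (j1 * k)) = sin (dft_angle (j2 * k))) ->
  a j1 ord0 = a j2 ord0.
Proof.
move=> same_phase; apply: (@mulfI _ N%:R); first by rewrite pnatr_eq0.
rewrite !dft_inversion; apply: eq_bigr => k _.
have [/same_phase[-> ->] //|] := boolP (in_supp_dft a k).
by rewrite negb_or !negbK => /andP[/eqP-> /eqP->]; rewrite !mul0r subrr.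
Qed.

Lemma in_supp_dft_subn a (k : nat) : (k <= N)%N ->
  in_supp_dft a k -> in_supp_dft a (N - k).
Proof.
move=> leqkN; rewrite /in_supp_dft.
have -> : dft_re a (N - k) = dft_re a k.
  apply: eq_bigr => j _; rewrite -[X in cos X]/(dft_angle (j * (N - k))).
  by rewrite dft_angleNB // (periodicn (@cosD2pi R)) cosN.
have -> : dft_im a (N - k) = - dft_im a k.
  rewrite /dft_im opprK -sumrN; apply: eq_bigr => j _.
  rewrite -[X in sin X]/(dft_angle (j * (N - k))).
  by rewrite dft_angleNB // (periodicn (@sinD2pi R)) sinN mulrN opprK.
by rewrite (oppr_eq0 (dft_im a k)).
Qed.

Section Shift.
Variables (a : 'cV[R]_N) (m k : nat).
Let C := cos (dft_angle (m * k)).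
Let S := sin (dft_angle (m * k)).

Let rot_ord (j : 'I_N) : 'I_N := inord ((j + m) %% N).

Let rot_ord_inj : injective rot_ord.
Proof.
move=> j1 j2 /(congr1 val); rewrite /= !inordK ?ltn_pmod // => /eqP.
by rewrite eqn_modDr !modn_small // => /eqP /val_inj.
Qed.

Let dft_angle_rot_ord (j : 'I_N) :
  cos (dft_angle (rot_ord j * k)) = cos (dft_angle (j * k) + dft_angle (m * k)) /\
  sin (dft_angle (rot_ord j * k)) = sin (dft_angle (j * k) + dft_angle (m * k)).
Proof.
have -> : dft_angle (j * k) + dft_angle (m * k) = dft_angle ((j + m) * k).
  by rewrite /dft_angle mulnDl natrD; ring.
rewrite inordK ?ltn_pmod // -cos_dft_angle_mod -sin_dft_angle_mod modnMml.
by rewrite cos_dft_angle_mod sin_dft_angle_mod.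
Qed.

Lemma dft_re_crot :
  dft_re a k = C * dft_re (crot m a) k + S * dft_im (crot m a) k.
Proof.
rewrite {1}/dft_re (reindex_inj rot_ord_inj) /= /dft_re /dft_im mulrN !mulr_sumr.
rewrite -sumrN -big_split /=; apply: eq_bigr => j _.
rewrite crot_nat -[X in cos X]/(dft_angle (rot_ord j * k)).
rewrite (dft_angle_rot_ord j).1 cosD /C /S /dft_angle; ring.
Qed.

Lemma dft_im_crot :
  dft_im a k = C * dft_im (crot m a) k - S * dft_re (crot m a) k.
Proof.
rewrite {1}/dft_im (reindex_inj rot_ord_inj) /= /dft_re /dft_im !mulrN !mulr_sumr.
rewrite -!sumrN -big_split /=; apply: eq_bigr => j _.
rewrite crot_nat -[X in sin X]/(dft_angle (rot_ord j * k)).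
rewrite (dft_angle_rot_ord j).2 sinD /C /S /dft_angle; ring.
Qed.

End Shift.

End DiscreteFourier.

Section RotationInvariance.
Variables (R : realType) (n : nat) (a : 'cV[R]_n.+1).
Local Notation N := n.+1.

Lemma crot_fixed_dvdn (m k : nat) :
  crot m a = a -> in_supp_dft a k -> (N %| m * k)%N.
Proof.
(* By the shift theorem [F(a)_k = e^(2 pi i m k / N) F(a)_k], and [F(a)_k <> 0]. *)
move=> fixed supp_k; apply: (@cos_dft_angle_eq1 R).
have := dft_im_crot a m k; have := dft_re_crot a m k; rewrite fixed.
set C := cos _; set S := sin _; set re := dft_re a k; set im := dft_im a k.
move=> re_rot im_rot.
have norm_neq0 : re ^+ 2 + im ^+ 2 != 0.
  rewrite paddr_eq0 ?sqr_ge0 // !sqrf_eq0 negb_and.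
  by move: supp_k; rewrite /in_supp_dft.
have : (1 - C) * (re ^+ 2 + im ^+ 2) = 0.
  have -> : (1 - C) * (re ^+ 2 + im ^+ 2) =
      re * (re - (C * re + S * im)) + im * (im - (C * im - S * re)) by ring.
  by rewrite -re_rot -im_rot !subrr !mulr0 addr0.
by move/eqP; rewrite mulf_eq0 (negbTE norm_neq0) orbF subr_eq0 => /eqP.
Qed.

Lemma crot_fixed_of_dvdn (m : nat) :
  (forall k : 'I_N, in_supp_dft a k -> (N %| m * k)%N) -> crot m a = a.
Proof.
move=> dvdN; apply/matrixP => j z; rewrite (ord1 z) crot_nat.
apply: eq_coef_of_dft => k /dvdN /dvdnP[q mkE].
suff angle_mod : ((inord ((j + m) %% N) : 'I_N) * k %% N = j * k %% N)%N.
  by rewrite -cos_dft_angle_mod -sin_dft_angle_mod angle_mod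
    cos_dft_angle_mod sin_dft_angle_mod.
by rewrite inordK ?ltn_pmod // modnMml mulnDl mkE addnC modnMDl.
Qed.

Lemma exists_supp_dft_gt0 :
  ~ parallel_to_one a -> exists2 k : 'I_N, (0 < k)%N & in_supp_dft a k.
Proof.
move=> nonconst.
have [/existsP[k /andP[k_gt0 supp_k]]|/existsPn no_supp] :=
  boolP [exists k : 'I_N, (0 < k)%N && in_supp_dft a k]; first by exists k.
case: nonconst; exists (a ord0 ord0); apply/matrixP => i z.
rewrite (ord1 z) !mxE mulr1; apply: eq_coef_of_dft => k supp_k.
have [->|k_gt0] := posnP k; first by rewrite !muln0.
by move: (no_supp k); rewrite k_gt0 supp_k.
Qed.

End RotationInvariance.

Section GcdSupport.
Variables (R : realType) (n : nat) (a : 'cV[R]_n.+1).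
Local Notation N := n.+1.
Local Notation G := (gcd_supp a).

Lemma gcd_supp_dvdn (k : 'I_N) : (0 < k)%N -> in_supp_dft a k -> (G %| k)%N.
Proof. by move=> k_gt0 supp_k; apply: (biggcdn_inf k); rewrite ?k_gt0. Qed.

Lemma dvdn_mul_gcd_supp (m : nat) :
  (forall k : 'I_N, in_supp_dft a k -> (N %| m * k)%N) <-> (N %| m * G)%N.
Proof.
split=> [dvdN|dvdNG k supp_k].
  rewrite (big_morph (muln m) (muln_gcdr m) (muln0 m)).
  by apply/dvdn_biggcdP => k /andP[_ /dvdN].
have [->|k_gt0] := posnP k; first by rewrite muln0.
exact: dvdn_trans dvdNG (dvdn_mul (dvdnn m) (gcd_supp_dvdn k_gt0 supp_k)).
Qed.

Hypothesis nonconst : ~ parallel_to_one a.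

Lemma gcd_supp_gt0 : (0 < G)%N.
Proof.
have [k k_gt0 supp_k] := exists_supp_dft_gt0 nonconst.
rewrite lt0n; apply: contraL (gcd_supp_dvdn k_gt0 supp_k) => /eqP->.
by rewrite dvd0n -lt0n.
Qed.

Lemma gcd_supp_dvdN : (G %| N)%N.
Proof.
have [k k_gt0 supp_k] := exists_supp_dft_gt0 nonconst.
have ltkN := ltn_ord k.
have ltNkN : (N - k < N)%N by rewrite ltn_subrL k_gt0.
have dvd_Nk : (G %| N - k)%N.
  apply: (@gcd_supp_dvdn (Ordinal ltNkN)); first by rewrite subn_gt0.
  exact: in_supp_dft_subn (ltnW ltkN) supp_k.
by have := dvdn_add dvd_Nk (gcd_supp_dvdn k_gt0 supp_k); rewrite subnK // ltnW.
Qed.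

Lemma crot_fixedE (m : nat) : crot m a = a <-> (N %/ G %| m)%N.
Proof.
rewrite -(dvdn_pmul2r gcd_supp_gt0) divnK ?gcd_supp_dvdN // -dvdn_mul_gcd_supp.
split=> [fixed k|]; [exact: crot_fixed_dvdn|exact: crot_fixed_of_dvdn].
Qed.

End GcdSupport.

Definition calK_orbit (R : realType) (N : nat) (a : 'cV[R]_N) (x : R) : 'cV[R]_N :=
  (calK N x)^T *m a.

Section CalKPeriods.
Variables (R : realType) (n : nat) (a : 'cV[R]_n.+1).
Local Notation N := n.+1.
Local Notation orbit := (calK_orbit a).

Lemma is_period_gfunE (b : 'cV[R]_N) (L : R) :
  is_period (gfun a b) L <-> is_period orbit L.
Proof.
split=> per x; move: (per x); rewrite /gfun /calK_orbit; first by move/addrI/oppr_inj.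
by move->.
Qed.

Lemma is_period_intE (m : int) : is_period orbit m%:~R <-> crot m a = a.
Proof.
split=> [per|fixed x].
  by have := per 0%:~R; rewrite /calK_orbit -intrD add0r !trmx_calK_int_mulmx crot0.
have := frac_itv x; set k := Num.floor x; set f := x - _ => f01.
have -> : x + m%:~R = (k + m)%:~R + f by rewrite intrD /f; ring.
have {1}-> : x = k%:~R + f by rewrite /f; ring.
have crotDm p : crot (p + m) a = crot p a by rewrite -crotD fixed.
by rewrite /calK_orbit !trmx_calK_mulmx // crotDm [k + m + 1]addrAC crotDm.
Qed.

Lemma frac_period_second_diff0 (L : R) :
  is_period orbit L -> 0 < L - (Num.floor L)%:~R ->
  forall (k : int) (i : 'I_N),
    crot k a i ord0 *+ 2 = crot (k - 1) a i ord0 + crot (k + 1) a i ord0.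
Proof.
(* The period equation at [k], [k - f] and [k + 1 - f]; the last two are
   shifted onto the integers [k + m] and [k + m + 1]. *)
move=> per; have := frac_itv L; set m := Num.floor L; set f := L - _.
move=> /andP[_ f_lt1] f_gt0 k i.
have orbitE (l : int) (s : R) : 0 <= s < 1 ->
    orbit (l%:~R + s) i ord0 = (1 - s) * crot l a i ord0 + s * crot (l + 1) a i ord0.
  by move=> s01; rewrite /calK_orbit trmx_calK_mulmx // !mxE.
have orbit_int (l : int) : orbit l%:~R i ord0 = crot l a i ord0.
  by rewrite /calK_orbit trmx_calK_int_mulmx.
have LE : L = m%:~R + f by rewrite /f addrC subrK.
have f01 : 0 <= f < 1 by rewrite f_lt1 ltW.
have f'01 : 0 <= 1 - f < 1 by apply/andP; split; lra.
have u_avg : crot k a i ord0 =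
    (1 - f) * crot (k + m) a i ord0 + f * crot (k + m + 1) a i ord0.
  by rewrite -orbitE // -orbit_int -(per k%:~R) LE addrA intrD.
have left_avg : crot (k + m) a i ord0 =
    f * crot (k - 1) a i ord0 + (1 - f) * crot k a i ord0.
  have := orbitE (k - 1) _ f'01; rewrite subKr subrK => <-.
  rewrite -orbit_int -(per ((k - 1)%:~R + (1 - f))) LE.
  by congr (orbit _ i ord0); rewrite !intrD; ring.
have right_avg : crot (k + m + 1) a i ord0 =
    f * crot k a i ord0 + (1 - f) * crot (k + 1) a i ord0.
  have := orbitE k _ f'01; rewrite subKr => <-.
  rewrite -orbit_int -(per (k%:~R + (1 - f))) LE.
  by congr (orbit _ i ord0); rewrite !intrD; ring.
move: u_avg; rewrite left_avg right_avg.
set u := crot k a i ord0; set p := crot (k - 1) a i ord0; set q := crot (k + 1) a i ord0.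
move=> u_avg; have : f * (1 - f) * (u *+ 2 - p - q) = 0.
  have -> : f * (1 - f) * (u *+ 2 - p - q) =
      u - ((1 - f) * (f * p + (1 - f) * u) + f * (f * u + (1 - f) * q)) by ring.
  by rewrite -u_avg subrr.
by move/eqP; rewrite !mulf_eq0 => /orP[/orP[]|] /eqP; lra.
Qed.

Lemma parallel_of_frac_period (L : R) :
  is_period orbit L -> 0 < L - (Num.floor L)%:~R -> parallel_to_one a.
Proof.
move=> per frac_gt0; pose U j := crot (Posz j) a ord0 ord0.
have diff0 j : U j.+1 *+ 2 = U j + U j.+2.
  have := frac_period_second_diff0 per frac_gt0 (Posz j.+1) ord0.
  have -> : Posz j.+1 - 1 = j by rewrite -addn1 PoszD addrK.
  by have -> : Posz j.+1 + 1 = j.+2 by rewrite -[j.+2]addn1 PoszD.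
have UE j : U j = a (inord (j %% N)) ord0 by rewrite /U crot_nat.
have U_periodic : U N = U 0%N by rewrite !UE modnn mod0n.
have slope0 : U 1%N - U 0%N = 0.
  move: U_periodic; rewrite (second_diff0_affine diff0) => /eqP.
  by rewrite -subr_eq0 addrAC subrr add0r mulf_eq0 pnatr_eq0 => /eqP.
exists (a ord0 ord0); apply/matrixP => i z; rewrite (ord1 z) !mxE mulr1.
have := second_diff0_affine diff0 i; rewrite slope0 mulr0 addr0 !UE.
by rewrite mod0n modn_small // inord_val => ->; congr (a _ _); apply/val_inj/inordK.
Qed.

End CalKPeriods.

Theorem proposition4p1 (R : realType) (N : nat) (hN : (2 <= N)%N)
    (a b : 'cV[R]_N) (ha : ~ parallel_to_one a) (hb : ~ parallel_to_one b) :
  let L := (N%:R / (gcd_supp a)%:R : R) in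
  0 < L /\ is_period (gfun a b) L /\
  (forall L' : R, 0 < L' -> is_period (gfun a b) L' -> L <= L').
Proof.
case: N hN a b ha hb => [//|n] _ a b ha _ L.
set d := (n.+1 %/ gcd_supp a)%N.
have LE : L = d%:R by rewrite /d natf_div // (gcd_supp_dvdN ha).
have d_gt0 : (0 < d)%N.
  by rewrite divn_gt0 ?(gcd_supp_gt0 ha) // dvdn_leq // (gcd_supp_dvdN ha).
split; first by rewrite LE ltr0n.
split; first by rewrite LE is_period_gfunE (is_period_intE a d) crot_fixedE.
move=> L' L'_gt0 /is_period_gfunE per.
have [frac_gt0|] := ltP 0 (L' - (Num.floor L')%:~R).
  by case: ha; exact: parallel_of_frac_period per frac_gt0.
rewrite subr_le0 => floor_ge; have [m L'E] : exists m : nat, L' = m%:R.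
  exists `|Num.floor L'|%N; rewrite pmulrn gez0_abs ?floor_ge0 ?ltW //.
  by apply/eqP; rewrite eq_le floor_ge floor_le.
move: L'_gt0 per; rewrite L'E ltr0n -[m%:R]/((Posz m)%:~R) is_period_intE.
by rewrite crot_fixedE // LE ler_nat => m_gt0 /dvdn_leq->.
Qed.
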